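(* Let $H=(V,E)$ be a finite hypergraph with $E=\{e_1,\dots,e_{|E|}\}$, let $w:E\to\mathbb{Z}_2$ and $v\in V$, and define $\Lambda_v(|\psi_w\rangle)=|l_v(w_{e_1})\cdots l_v(w_{e_{|E|}})\rangle$, where $l_v(w_e)=\overline{w(e)}$ if $v\in e$ and $l_v(w_e)=w(e)$ otherwise. (i) If $|\psi_w\rangle\in\Pi$, then $\Lambda_v(|\psi_w\rangle)\in\Pi$. (ii) If $|\psi_w\rangle\in\mathcal{H}(E)\setminus\Pi$, then $\Lambda_v(|\psi_w\rangle)\in\mathcal{H}(E)\setminus\Pi$.
   Context: A hypergraph is $H=(V,E)$ with $V$ finite and $E\subset\mathcal{P}(V)$. For $p\in\mathbb{Z}_2$, $\overline{p}=p\oplus1$. For $w:E\to\mathbb{Z}_2$, $|\psi_w\rangle=|w(e_1)\cdots w(e_{|E|})\rangle$, and $\mathcal{H}(E)$ is the set of all such states. $w$ is a parity weight if there is $f:V\to\mathbb{Z}_2$ with $\overline{w(e)}=\bigoplus_{u\in e}f(u)$ for all $e\in E$; $\Pi=\{|\psi_w\rangle : w\text{ a parity weight}\}$. *)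

From mathcomp Require Import all_boot.
Set Implicit Arguments. Unset Strict Implicit. Unset Printing Implicit Defensive.

(* A finite hypergraph H = (V,E): V a finType, E : {set {set V}}.
   The fixed enumeration e_1,...,e_|E| of E is [enum E].
   Z_2 is bool, with xor (addb) as addition and negb as p |-> p+1. *)

Definition ket (V : finType) (E : {set {set V}}) (w : {set V} -> bool) : seq bool :=
  [seq w e | e <- enum E].

Definition HE (V : finType) (E : {set {set V}}) (psi : seq bool) : Prop :=
  exists w : {set V} -> bool, psi = ket E w.

Definition parity_weight (V : finType) (E : {set {set V}}) (w : {set V} -> bool) : Prop :=
  exists f : V -> bool,
    forall e, e \in E -> ~~ w e = \big[addb/false]_(u in e) f u.

Definition Pi (V : finType) (E : {set {set V}}) (psi : seq bool) : Prop :=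
  exists w : {set V} -> bool, parity_weight E w /\ psi = ket E w.

Definition lv (V : finType) (v : V) (e : {set V}) (b : bool) : bool :=
  if v \in e then ~~ b else b.

Definition Lambda (V : finType) (E : {set {set V}}) (v : V) (psi : seq bool) : seq bool :=
  [seq lv v eb.1 eb.2 | eb <- zip (enum E) psi].

From mathcomp Require Import all_boot.

(* Lambda_v adds the indicator of "v in e" to the weight of every edge e.  If
   f witnesses that w is a parity weight, then f with its value at v flipped
   witnesses it for the toggled weight, since flipping f v changes exactly the
   parities of the edges through v.  As Lambda_v is an involution, it also
   maps non-parity weights to non-parity weights. *)

Lemma lvE (V : finType) (v : V) (e : {set V}) (b : bool) : lv v e b = (v \in e) (+) b.
Proof. by rewrite /lv; case: (v \in e). Qed.

Lemma lvK (V : finType) (v : V) (e : {set V}) : involutive (lv v e).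
Proof. by move=> b; rewrite !lvE addbA addbb. Qed.

Lemma Lambda_ket (V : finType) (E : {set {set V}}) (v : V) (w : {set V} -> bool) :
  Lambda E v (ket E w) = ket E (fun e => lv v e (w e)).
Proof. by rewrite /Lambda /ket; elim: (enum E) => //= e s ->. Qed.

Lemma parity_weight_eq_in (V : finType) (E : {set {set V}}) (w1 w2 : {set V} -> bool) :
  {in E, w1 =1 w2} -> parity_weight E w1 -> parity_weight E w2.
Proof. by move=> w12 [f wf]; exists f => e eE; rewrite -w12 // wf. Qed.

Lemma Pi_ket (V : finType) (E : {set {set V}}) (w : {set V} -> bool) :
  Pi E (ket E w) <-> parity_weight E w.
Proof.
split=> [[w' [w'_pw /eq_in_map w'w]] | w_pw]; last by exists w.
by apply: parity_weight_eq_in w'_pw => e eE; rewrite w'w // mem_enum.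
Qed.

Lemma big_addb_pred1 (V : finType) (e : {set V}) (v : V) :
  \big[addb/false]_(u in e) (u == v) = (v \in e).
Proof.
have [ve | vNe] := boolP (v \in e).
  by rewrite (bigD1 v ve) eqxx big1 // => u /andP[_ /negbTE].
by apply: big1 => u ue; apply/eqP => uv; rewrite -uv ue in vNe.
Qed.

Lemma parity_weight_lv (V : finType) (E : {set {set V}}) (v : V) (w : {set V} -> bool) :
  parity_weight E w -> parity_weight E (fun e => lv v e (w e)).
Proof.
move=> [f wf]; exists (fun u => f u (+) (u == v)) => e eE.
by rewrite big_split /= big_addb_pred1 -wf // lvE -addbN addbC.
Qed.

Lemma parity_weight_lvE (V : finType) (E : {set {set V}}) (v : V) (w : {set V} -> bool) :
  parity_weight E (fun e => lv v e (w e)) <-> parity_weight E w.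
Proof.
split; last exact: parity_weight_lv.
by move/(@parity_weight_lv _ _ v); apply: parity_weight_eq_in => e _; rewrite lvK.
Qed.

Theorem lemma5 (V : finType) (E : {set {set V}}) (w : {set V} -> bool) (v : V) :
  (Pi E (ket E w) -> Pi E (Lambda E v (ket E w))) /\
  (HE E (ket E w) /\ ~ Pi E (ket E w) ->
     HE E (Lambda E v (ket E w)) /\ ~ Pi E (Lambda E v (ket E w))).
Proof.
rewrite Lambda_ket; split; first by move/Pi_ket/parity_weight_lvE/Pi_ket.
move=> [_ not_Pi]; split; first by eexists.
by move/Pi_ket/parity_weight_lvE/Pi_ket/not_Pi.
Qed.
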